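(* Consider the three-door Monty Hall game described in the context. For every pure strategy $A$ of Conie there exists a door $u\in\{1,2,3\}$ (depending on $A$) such that $A$ loses against every pure strategy $(\theta,d)$ of Monte with $\theta=u$ (that is, whatever door $d$ Monte offers in case of a match). Consequently the always-switching strategy $u\,\mathrm{s}\,\mathrm{s}$ weakly dominates $A$: for every pure strategy $S$ of Monte, if $A$ wins against $S$ then $u\,\mathrm{s}\,\mathrm{s}$ wins against $S$.
   Context: Doors are numbered $1,2,3$. A pure strategy of Monte is a pair $(\theta,d)$ with $\theta\in\{1,2,3\}$ (the door hiding the prize) and $d\in\{1,2,3\}\setminus\{\theta\}$; there are six of them: $12,13,21,23,31,32$. A pure strategy of Conie is a triple $x\,a\,b$ with $x\in\{1,2,3\}$ (her initial choice) and $a,b\in\{\mathrm{h},\mathrm{s}\}$ (hold or switch); there are twelve of them. A play under the profile $((\theta,d),x\,a\,b)$ proceeds as follows: Monte offers door $y$, where $y=\theta$ if $x\neq\theta$ and $y=d$ if $x=\theta$ (a match). Conie's action is $a$ if $y$ is the smaller of the two doors in $\{1,2,3\}\setminus\{x\}$ and $b$ if it is the larger. Her final choice is $z=x$ if the action is $\mathrm{h}$ and $z=y$ if it is $\mathrm{s}$. Conie wins (payoff $1$) iff $z=\theta$, otherwise she gets payoff $0$. Strategies $x\,\mathrm{s}\,\mathrm{s}$ are called always-switching. *)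

From Stdlib Require Import Arith Bool.

Inductive door := d1 | d2 | d3.

Definition door_num (x : door) : nat :=
  match x with d1 => 1 | d2 => 2 | d3 => 3 end.

Definition door_eqb (x y : door) : bool := Nat.eqb (door_num x) (door_num y).

(* Actions: hold or switch *)
Inductive action := h | s.

Record monte_strategy := MonteS {
  theta : door;
  offer : door;
  offer_ne : theta <> offer }.

(* Pure strategy of Conie: x a b *)
Record conie_strategy := ConieS {
  init : door;
  act_small : action;
  act_large : action }.

Definition smaller_other (x : door) : door :=
  match x with d1 => d2 | d2 => d1 | d3 => d1 end.

Definition offered (m : monte_strategy) (c : conie_strategy) : door :=
  if door_eqb (init c) (theta m) then offer m else theta m.

Definition conie_action (m : monte_strategy) (c : conie_strategy) : action :=
  if door_eqb (offered m c) (smaller_other (init c)) then act_small c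
  else act_large c.

Definition final_choice (m : monte_strategy) (c : conie_strategy) : door :=
  match conie_action m c with h => init c | s => offered m c end.

Definition wins (c : conie_strategy) (m : monte_strategy) : Prop :=
  final_choice m c = theta m.

Definition always_switch (u : door) : conie_strategy := ConieS u s s.

(* When Monte's prize door differs from Conie's initial door, he must offer the
   prize, so Conie wins exactly when she switches; on a match she wins exactly
   when she holds.  Hence a strategy that holds on some door [u] other than its
   initial door always loses when the prize is behind [u], and a strategy that
   always switches loses whenever the prize is behind its initial door [u].
   Always switching to [u] wins precisely when the prize is not behind [u],
   which covers every play the strategy can win. *)

Definition larger_other (x : door) : door :=
  match x with d1 => d3 | d2 => d3 | d3 => d2 end.

Definition blind_spot (c : conie_strategy) : door :=
  match act_small c, act_large c with
  | s, s => init c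
  | h, _ => smaller_other (init c)
  | s, h => larger_other (init c)
  end.

Lemma door_eqbP (x y : door) : reflect (x = y) (door_eqb x y).
Proof. destruct x, y; constructor; congruence. Qed.

Lemma smaller_other_neq (x : door) : smaller_other x <> x.
Proof. destruct x; discriminate. Qed.

Lemma larger_other_neq (x : door) : larger_other x <> x.
Proof. destruct x; discriminate. Qed.

Lemma offered_unmatched (m : monte_strategy) (c : conie_strategy) :
  init c <> theta m -> offered m c = theta m.
Proof. intros Hne; unfold offered; destruct (door_eqbP (init c) (theta m)); easy. Qed.

Lemma offered_matched (m : monte_strategy) (c : conie_strategy) :
  init c = theta m -> offered m c = offer m.
Proof. intros Heq; unfold offered; destruct (door_eqbP (init c) (theta m)); easy. Qed.

Lemma conie_action_cases (m : monte_strategy) (c : conie_strategy) :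
  conie_action m c = act_small c \/ conie_action m c = act_large c.
Proof. unfold conie_action; destruct door_eqb; auto. Qed.

Lemma conie_action_smaller (m : monte_strategy) (c : conie_strategy) :
  offered m c = smaller_other (init c) -> conie_action m c = act_small c.
Proof.
  intros Hy; unfold conie_action; rewrite Hy.
  destruct (door_eqbP (smaller_other (init c)) (smaller_other (init c))); easy.
Qed.

Lemma conie_action_larger (m : monte_strategy) (c : conie_strategy) :
  offered m c = larger_other (init c) -> conie_action m c = act_large c.
Proof.
  intros Hy; unfold conie_action; rewrite Hy.
  destruct (door_eqbP (larger_other (init c)) (smaller_other (init c))) as [E|]; auto.
  destruct (init c); discriminate E.
Qed.

Lemma wins_unmatched (c : conie_strategy) (m : monte_strategy) :
  init c <> theta m -> (wins c m <-> conie_action m c = s).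
Proof.
  intros Hne; unfold wins, final_choice; rewrite (offered_unmatched m c Hne).
  destruct (conie_action m c); split; congruence.
Qed.

Lemma wins_matched (c : conie_strategy) (m : monte_strategy) :
  init c = theta m -> (wins c m <-> conie_action m c = h).
Proof.
  intros Heq; unfold wins, final_choice; rewrite (offered_matched m c Heq).
  pose proof (offer_ne m).
  destruct (conie_action m c); split; congruence.
Qed.

Lemma wins_always_switch (u : door) (m : monte_strategy) :
  wins (always_switch u) m <-> theta m <> u.
Proof.
  destruct (door_eqbP u (theta m)) as [Hu | Hu].
  - rewrite (wins_matched (always_switch u) m Hu); simpl.
    pose proof (conie_action_cases m (always_switch u)) as Hs; simpl in Hs.
    split; [destruct Hs as [-> | ->]; discriminate | congruence].
  - rewrite (wins_unmatched (always_switch u) m Hu).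
    destruct (conie_action_cases m (always_switch u)) as [-> | ->]; simpl;
      split; congruence.
Qed.

Lemma loses_at_blind_spot (c : conie_strategy) (m : monte_strategy) :
  theta m = blind_spot c -> ~ wins c m.
Proof.
  unfold blind_spot; intros Ht.
  destruct (act_small c) eqn:Ea, (act_large c) eqn:Eb.
  1, 2: assert (Hne : init c <> theta m)
          by (rewrite Ht; apply not_eq_sym, smaller_other_neq);
        rewrite (wins_unmatched c m Hne),
          (conie_action_smaller m c (eq_trans (offered_unmatched m c Hne) Ht)), Ea;
        discriminate.
  - assert (Hne : init c <> theta m)
      by (rewrite Ht; apply not_eq_sym, larger_other_neq).
    rewrite (wins_unmatched c m Hne),
      (conie_action_larger m c (eq_trans (offered_unmatched m c Hne) Ht)), Eb.
    discriminate.
  - rewrite (wins_matched c m (eq_sym Ht)).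
    destruct (conie_action_cases m c) as [-> | ->]; congruence.
Qed.

Lemma always_switch_dominates (A : conie_strategy) (u : door) :
  (forall S : monte_strategy, theta S = u -> ~ wins A S) ->
  forall S : monte_strategy, wins A S -> wins (always_switch u) S.
Proof.
  intros Hlose S HA; apply wins_always_switch.
  intros Hu; exact (Hlose S Hu HA).
Qed.

Theorem mainTheorem1 :
  forall A : conie_strategy,
    exists u : door,
      (forall S : monte_strategy, theta S = u -> ~ wins A S) /\
      (forall S : monte_strategy, wins A S -> wins (always_switch u) S).
Proof.
  intros A; exists (blind_spot A).
  assert (Hlose : forall S, theta S = blind_spot A -> ~ wins A S)
    by (intros S; apply loses_at_blind_spot).
  split; [exact Hlose | exact (always_switch_dominates A _ Hlose)].
Qed.
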